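(* Let $0<p<1$, $q=1-p$, let $\{X_i,i\geq 1\}$ be independent with $P\{X_i=1\}=p$, $P\{X_i=0\}=q$, and write $\lambda=1/\sqrt{pq}$. Let $\varepsilon>0$. Then for almost all $\omega$ there exists a finite $N_0=N_0(\omega,\varepsilon)$ such that for all $N\geq N_0$, $$M_N\geq \left\lfloor \log_{\lambda} N-\log_{\lambda}\log_{\lambda}\log_{\lambda} N+\log_{\lambda}\log_{\lambda} e-\log_{\lambda}2- 1- \varepsilon\right\rfloor .$$
   Context: For $m,n\in\mathbb N$ let $S_n^{(m)}:=\sum_{i=m+1}^{n+m-1}\big[(1-X_{i-1})X_i+X_{i-1}(1-X_i)\big]$ be the number of switches among $X_m,\ldots,X_{m+n-1}$. For $m,N\in\mathbb N$ and $n=1,\ldots,N$ let $H_{m,n}^{(N)}:=\bigcup_{i=m}^{m+N-n+1}\{S_n^{(i)}=n-1\}$, and $M_N^{(m)}:=\max_{1\leq n\leq N}\{n-1 : H_{m,n}^{(N)}\neq\emptyset\}$ (length of the longest consecutive switches in $X_m,\ldots,X_{m+N-1}$). Write $M_N:=M_N^{(1)}$. *)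

From HB Require Import structures.
From mathcomp Require Import all_boot all_order all_algebra.
From mathcomp Require Import all_classical all_reals all_analysis.
Set Implicit Arguments. Unset Strict Implicit. Unset Printing Implicit Defensive.
Import Order.TTheory GRing.Theory Num.Theory.
Local Open Scope classical_set_scope.
Local Open Scope ring_scope.

Definition mutually_independent_rvs {d} {T : measurableType d} {R : realType}
  (P : probability T R) (X : nat -> T -> R) : Prop :=
  forall (s : seq nat) (B : nat -> set R),
    uniq s -> all (fun i => 0 < i)%N s ->
    (forall i, measurable (B i)) ->
    P (\bigcap_(i in [set` s]) (X i @^-1` B i)) =
    (\prod_(i <- s) P (X i @^-1` B i))%E.

Definition switches {T : Type} {R : realType} (X : nat -> T -> R)
  (n m : nat) (w : T) : R :=
  \sum_(m.+1 <= i < n + m)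
     ((1 - X i.-1 w) * X i w + X i.-1 w * (1 - X i w)).

Definition inH {T : Type} {R : realType} (X : nat -> T -> R)
  (m n N : nat) (w : T) : bool :=
  has (fun i => switches X n i w == (n.-1)%:R) (iota m (N - n + 2)).

(* M_N^{(m)}(w) = max_{1 <= n <= N} {n-1 : w \in H_{m,n}^{(N)}} (0 if N = 0) *)
Definition longest_switches {T : Type} {R : realType} (X : nat -> T -> R)
  (m N : nat) (w : T) : nat :=
  \max_(1 <= n < N.+1 | inH X m n N w) n.-1.

Definition M {T : Type} {R : realType} (X : nat -> T -> R) (N : nat) (w : T)
  : nat := longest_switches X 1 N w.

Definition logb {R : realType} (b x : R) : R := ln x / ln b.

From HB Require Import structures.
From mathcomp Require Import all_boot all_order all_algebra.
From mathcomp Require Import all_classical all_reals all_analysis.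
From mathcomp Require Import ring lra zify.
Set Implicit Arguments. Unset Strict Implicit. Unset Printing Implicit Defensive.
Import Order.TTheory GRing.Theory Num.Theory.
Local Open Scope classical_set_scope.
Local Open Scope ring_scope.

(* Cut the first T bits into blocks of 2n bits.  Inside a block the events
   "bits j and j+1 agree and an alternating window of length n starts at j+1"
   (j < n) are disjoint, each of probability at least (pq)^(n/2) = lam^-n, so a
   block contains no alternating window of length n with probability at most
   1 - n lam^-n, and the first T bits contain none with probability at most
   exp(-n lam^-n floor(T/2n)).  For T_n = floor(2 lam^(n+eps) ln(n-1)) this is
   O((n-1)^(-lam^eps)), summable since lam^eps > 1, so by Borel-Cantelli almost
   surely the first T_n bits contain an alternating window of length n for all
   large n.  Such a window gives M_N >= n - 1 once T_n <= N, and T_n <= N as soon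
   as n - 1 is below the bound of the theorem. *)

Fixpoint bitseqs (n : nat) : seq (seq bool) :=
  if n is n'.+1 then [seq true :: s | s <- bitseqs n'] ++ [seq false :: s | s <- bitseqs n']
  else [:: [::]].

Lemma mem_bitseqs s : s \in bitseqs (size s).
Proof.
elim: s => [|b s IHs] /=; first by rewrite inE.
by rewrite mem_cat; case: b; apply/orP; [left|right]; apply/mapP; exists s.
Qed.

Section bernoulli_expectation.
Variables (R : realType) (p : R).

Definition bit_weight (b : bool) : R := if b then p else 1 - p.

Definition bweight (s : seq bool) : R := \prod_(b <- s) bit_weight b.

Fixpoint bexpect (n : nat) (F : seq bool -> R) : R :=
  if n is n'.+1 then
    p * bexpect n' (fun s => F (true :: s)) + (1 - p) * bexpect n' (fun s => F (false :: s))
  else F [::].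

Lemma bexpectE n F : bexpect n F = \sum_(s <- bitseqs n) F s * bweight s.
Proof.
elim: n F => [|n IHn] F /=; first by rewrite big_seq1 /bweight big_nil mulr1.
rewrite !IHn big_cat !big_map !mulr_sumr.
by congr (_ + _); apply: eq_bigr => s _; rewrite /bweight big_cons mulrCA mulrA.
Qed.

Lemma eq_bexpect n F G :
  (forall s, size s = n -> F s = G s) -> bexpect n F = bexpect n G.
Proof.
elim: n F G => [|n IHn] F G FG /=; first exact: FG.
by congr (_ * _ + _ * _); apply: IHn => s hs; apply: FG; rewrite /= hs.
Qed.

Lemma bexpect_cst n c : bexpect n (fun _ => c) = c.
Proof. by elim: n => //= n IHn; rewrite IHn; ring. Qed.

Lemma bexpectD n F G :
  bexpect n (fun s => F s + G s) = bexpect n F + bexpect n G.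
Proof. by elim: n F G => [|n IHn] F G //=; rewrite !IHn; ring. Qed.

Lemma bexpectB n F G :
  bexpect n (fun s => F s - G s) = bexpect n F - bexpect n G.
Proof. by elim: n F G => [|n IHn] F G //=; rewrite !IHn; ring. Qed.

Lemma bexpectZ n a F : bexpect n (fun s => a * F s) = a * bexpect n F.
Proof. by elim: n F => [|n IHn] F //=; rewrite !IHn; ring. Qed.

Lemma bexpect_sum (I : Type) (r : seq I) n (F : I -> seq bool -> R) :
  bexpect n (fun s => \sum_(i <- r) F i s) = \sum_(i <- r) bexpect n (F i).
Proof.
elim: r => [|i r IHr].
  by rewrite big_nil -[RHS](bexpect_cst n 0); apply: eq_bexpect => s _; rewrite big_nil.
transitivity (bexpect n (fun s => F i s + \sum_(j <- r) F j s)).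
  by apply: eq_bexpect => s _; rewrite big_cons.
by rewrite bexpectD IHr big_cons.
Qed.

Lemma bexpect_cat m k F G :
  bexpect (m + k) (fun s => F (take m s) * G (drop m s)) = bexpect m F * bexpect k G.
Proof.
elim: m F => [|m IHm] F /=.
  by rewrite -bexpectZ; apply: eq_bexpect => s _; rewrite take0 drop0.
by rewrite (IHm (fun s => F (true :: s))) (IHm (fun s => F (false :: s))); ring.
Qed.

Lemma bexpect_take m k F : bexpect (m + k) (fun s => F (take m s)) = bexpect m F.
Proof.
rewrite -[RHS]mulr1 -(bexpect_cst k 1) -bexpect_cat.
by apply: eq_bexpect => s _; rewrite mulr1.
Qed.

Lemma bexpect_drop m k F : bexpect (m + k) (fun s => F (drop m s)) = bexpect k F.
Proof.
rewrite -[RHS]mul1r -(bexpect_cst m 1) -bexpect_cat.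
by apply: eq_bexpect => s _; rewrite mul1r.
Qed.

Hypothesis p01 : 0 <= p <= 1.

Lemma ler_bexpect n F G :
  (forall s, size s = n -> F s <= G s) -> bexpect n F <= bexpect n G.
Proof.
case/andP: p01 => p0 p1.
elim: n F G => [|n IHn] F G FG /=; first exact: FG.
by rewrite lerD // ler_wpM2l ?subr_ge0 //; apply: IHn => s hs; apply: FG; rewrite /= hs.
Qed.

Lemma bexpect_ge0 n F : (forall s, size s = n -> 0 <= F s) -> 0 <= bexpect n F.
Proof. by move=> F0; rewrite -(bexpect_cst n 0); apply: ler_bexpect. Qed.

End bernoulli_expectation.

Section alternating_windows.
Local Open Scope nat_scope.
Implicit Types (t u v : seq bool) (a b : bool) (n m i j k : nat).

Definition alternating u := sorted (fun a b : bool => a != b) u.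

Definition alt_window t n j := (j + n <= size t) && alternating (take n (drop j t)).

Definition has_alt_window t n := has (alt_window t n) (iota 0 (size t).+1).

Lemma alt_window_neq t n j k :
  alt_window t n j -> k.+1 < n -> nth false t (j + k) != nth false t (j + k).+1.
Proof.
case/andP=> jn /sortedP alt kn.
have sz : size (take n (drop j t)) = n by rewrite size_takel // size_drop; lia.
have := alt false k; rewrite sz kn => /(_ isT).
by rewrite !nth_take // ?(ltnW kn) // !nth_drop addnS.
Qed.

Lemma has_alt_windowP t n : reflect (exists j, alt_window t n j) (has_alt_window t n).
Proof.
apply: (iffP hasP) => [[j _ w]|[j w]]; first by exists j.
by exists j => //; rewrite mem_iota add0n ltnS; case/andP: w => jn _; lia.
Qed.

Lemma alt_window_take t m n j :
  j + n <= m -> alt_window (take m t) n j = alt_window t n j.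
Proof.
move=> jnm; rewrite /alt_window size_take_min leq_min jnm /=.
by rewrite !take_drop take_takel // addnC.
Qed.

Lemma alt_window_drop t m n j :
  0 < n -> alt_window (drop m t) n j -> alt_window t n (m + j).
Proof.
move=> n0; rewrite /alt_window size_drop drop_drop (addnC j m) => /andP[jn ->].
by rewrite andbT; lia.
Qed.

Lemma has_alt_window_take t m n : has_alt_window (take m t) n -> has_alt_window t n.
Proof.
case/has_alt_windowP=> j w; apply/has_alt_windowP; exists j.
have jnm : j + n <= m by case/andP: w; rewrite size_take_min leq_min => /andP[].
by rewrite -(alt_window_take t jnm).
Qed.

Lemma has_alt_window_drop t m n :
  0 < n -> has_alt_window (drop m t) n -> has_alt_window t n.
Proof.
move=> n0 /has_alt_windowP[j /(alt_window_drop n0) w].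
by apply/has_alt_windowP; exists (m + j).
Qed.

(* A left-maximal alternating window of length [n] at [j+1]; two of them starting
   less than [n] apart are incompatible. *)
Definition run_start t n j := (nth false t j == nth false t j.+1) && alt_window t n j.+1.

Lemma run_start_disjoint t n i j :
  i < j < n -> run_start t n i -> run_start t n j -> False.
Proof.
case/andP=> ij jn /andP[_ wi] /andP[/eqP eqj _].
have : (j - i.+1).+1 < n by lia.
by move/(alt_window_neq wi); rewrite subnKC // eqj eqxx.
Qed.

Lemma sum_run_start_le t n : \sum_(j < n) run_start t n j <= has_alt_window t n.
Proof.
case: (pickP (fun j : 'I_n => run_start t n j)) => [j0 rj0|none]; last first.
  by rewrite big1 // => j _; rewrite none.
have -> : has_alt_window t n by apply/has_alt_windowP; exists j0.+1; case/andP: rj0.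
rewrite (bigD1 j0) //= rj0 big1 // => j /eqP neq; apply/eqP; rewrite eqb0; apply/negP => rj.
have : val j <> val j0 by move=> /val_inj.
case: (ltngtP j j0) => // lt _.
  by apply: (@run_start_disjoint t n j j0) rj rj0; rewrite lt ltn_ord.
by apply: (@run_start_disjoint t n j0 j) rj0 rj; rewrite lt ltn_ord.
Qed.

Lemma run_start_drop t n j : run_start t n j = run_start (drop j t) n 0.
Proof.
rewrite /run_start !nth_drop addn0 addn1; congr (_ && _).
rewrite /alt_window size_drop drop_drop add1n; congr (_ && _); apply/idP/idP; lia.
Qed.

Lemma run_start_take t n : run_start (take n.+2 t) n.+1 0 = run_start t n.+1 0.
Proof. by rewrite /run_start !nth_take // alt_window_take // add1n. Qed.

Lemma run_start_cons2 a b v :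
  run_start [:: a, b & v] (size v).+1 0 = (a == b) && path (fun x y : bool => x != y) b v.
Proof. by rewrite /run_start /alt_window /= leqnn take_size. Qed.

End alternating_windows.

Section alternating_run_probability.
Variables (R : realType) (p : R).
Hypothesis p01 : 0 < p < 1.
Local Notation r := (Num.sqrt (p * (1 - p))).

Let p01w : 0 <= p <= 1.
Proof. by case/andP: p01 => p0 p1; rewrite !ltW. Qed.

Lemma sqrt_pq_gt0 : 0 < r.
Proof. by case/andP: p01 => p0 p1; rewrite sqrtr_gt0 mulr_gt0 // subr_gt0. Qed.

Lemma sqrt_pq_le_half : r <= 1 / 2.
Proof.
have pq0 : 0 <= p * (1 - p) by case/andP: p01 => p0 p1; rewrite mulr_ge0 // ?subr_ge0 ltW.
have := sqr_sqrtr pq0; have := sqrtr_ge0 (p * (1 - p)).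
have : 0 <= (p - 1 / 2) ^+ 2 by exact: sqr_ge0.
rewrite !expr2; nra.
Qed.

Definition alt_chain (b : bool) (n : nat) : R :=
  bexpect p n (fun v => (path (fun x y : bool => x != y) b v)%:R).

Lemma alt_chain0 b : alt_chain b 0 = 1.
Proof. by []. Qed.

Lemma alt_chainS b n : alt_chain b n.+1 = bit_weight p (~~ b) * alt_chain (~~ b) n.
Proof.
by rewrite /alt_chain /=; case: b; rewrite /= bexpect_cst mulr0 ?add0r ?addr0.
Qed.

Lemma alt_chain_run_bound n :
  r ^+ n.+1 <= p ^+ 2 * alt_chain true n + (1 - p) ^+ 2 * alt_chain false n.
Proof.
have r2 : r ^+ 2 = p * (1 - p).
  by case/andP: p01w => p0 p1; rewrite sqr_sqrtr // mulr_ge0 // subr_ge0.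
pose f m := p ^+ 2 * alt_chain true m + (1 - p) ^+ 2 * alt_chain false m.
have fSS m : f m.+2 = r ^+ 2 * f m by rewrite /f r2 !alt_chainS /=; ring.
suff : r ^+ n.+1 <= f n /\ r ^+ n.+2 <= f n.+1 by case.
elim: n => [|n [IH0 IH1]]; split => //.
- have := sqrt_pq_le_half; have : 0 <= (p - 1 / 2) ^+ 2 by exact: sqr_ge0.
  by case/andP: p01 => p0 p1; rewrite /f !alt_chain0 !expr2; nra.
- have -> : f 1%N = r ^+ 2 by rewrite /f !alt_chainS !alt_chain0 r2 /=; ring.
  exact: lexx.
- by rewrite fSS -[n.+3]/(2 + n.+1)%N exprD ler_wpM2l // exprn_ge0 // sqrtr_ge0.
Qed.

Lemma bexpect_run_start n :
  bexpect p n.+2 (fun u => (run_start u n.+1 0)%:R) =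
  p ^+ 2 * alt_chain true n + (1 - p) ^+ 2 * alt_chain false n.
Proof.
pose F u := (if u is [:: a, b & v] then (a == b) && path (fun x y : bool => x != y) b v
             else false)%:R : R.
rewrite (eq_bexpect p (G := F)) => [|[|a [|b v]] //= [<-]]; last first.
  by rewrite run_start_cons2.
rewrite /= !bexpect_cst /alt_chain; ring.
Qed.

Lemma run_start_prob n j : (0 < n)%N -> (j < n)%N ->
  r ^+ n <= bexpect p (n + n) (fun t => (run_start t n j)%:R).
Proof.
case: n => // n _ jn.
pose F u := (run_start u n.+1 0)%:R : R.
have -> : (n.+1 + n.+1 = j + (n.+2 + (n - j)))%N by lia.
rewrite (eq_bexpect p (G := fun t => F (take n.+2 (drop j t)))) => [|t _]; last first.
  by rewrite /F run_start_take -run_start_drop.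
rewrite (bexpect_drop p j _ (fun u => F (take n.+2 u))) bexpect_take.
by rewrite bexpect_run_start alt_chain_run_bound.
Qed.

Lemma no_alt_window_block n : (0 < n)%N ->
  bexpect p (n + n) (fun t => (~~ has_alt_window t n)%:R) <= 1 - n%:R * r ^+ n.
Proof.
move=> n0.
apply: (@le_trans _ _ (bexpect p (n + n) (fun t => 1 - \sum_(j < n) (run_start t n j)%:R))).
  apply: ler_bexpect => // t _; rewrite -natr_sum lerBrDr -natrD lern1.
  by have := sum_run_start_le t n; case: (has_alt_window t n) => /=; lia.
rewrite bexpectB bexpect_cst bexpect_sum lerB //.
have -> : n%:R * r ^+ n = \sum_(j < n) r ^+ n by rewrite sumr_const card_ord mulr_natl.
by apply: ler_sum => j _; exact: run_start_prob.
Qed.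

Lemma no_alt_window_split t m n : (0 < n)%N ->
  ((~~ has_alt_window t n)%:R : R) <=
  (~~ has_alt_window (take m t) n)%:R * (~~ has_alt_window (drop m t) n)%:R.
Proof.
move=> n0; case: (boolP (has_alt_window t n)) => [_|nt]; first by rewrite mulr_ge0 ?ler0n.
rewrite (contra (@has_alt_window_take t m n) nt).
by rewrite (contra (@has_alt_window_drop t m n n0) nt) mulr1.
Qed.

Lemma no_alt_window_blocks n L K : (0 < n)%N ->
  bexpect p (K * L) (fun t => (~~ has_alt_window t n)%:R) <=
  bexpect p L (fun t => (~~ has_alt_window t n)%:R) ^+ K.
Proof.
move=> n0; pose f t := (~~ has_alt_window t n)%:R : R.
elim: K => [|K IHK]; first by rewrite mul0n expr0 /= lern1 leq_b1.
rewrite mulSn exprS.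
apply: (@le_trans _ _ (bexpect p (L + K * L) (fun t => f (take L t) * f (drop L t)))).
  by apply: ler_bexpect => // t _; exact: no_alt_window_split.
by rewrite bexpect_cat; apply: ler_wpM2l => //; apply: bexpect_ge0 => // t _; rewrite ler0n.
Qed.

Lemma no_alt_window_prob n T : (0 < n)%N ->
  bexpect p T (fun t => (~~ has_alt_window t n)%:R) <=
  expR (- (n%:R * r ^+ n) * (T %/ (n + n))%:R).
Proof.
move=> n0; set K := (T %/ (n + n))%N; set x := n%:R * r ^+ n.
pose f t := (~~ has_alt_window t n)%:R : R.
have KT : (K * (n + n) <= T)%N by exact: leq_divM.
apply: (@le_trans _ _ (bexpect p T (fun t => f (take (K * (n + n)) t)))).
  apply: ler_bexpect => // t _; rewrite /f; case: (boolP (has_alt_window (take _ t) n)) => /= [w|_].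
    by rewrite (has_alt_window_take w).
  by rewrite lern1 leq_b1.
rewrite -(subnKC KT) bexpect_take.
apply: le_trans (@no_alt_window_blocks n (n + n) K n0) _.
have block := no_alt_window_block n0.
have block0 : 0 <= bexpect p (n + n) f by apply: bexpect_ge0 => // t _; rewrite ler0n.
rewrite -/x in block; rewrite expRM_natr.
apply: le_trans (lerXn2r K _ _ block) _; rewrite ?nnegrE ?(le_trans block0) //.
apply: lerXn2r; rewrite ?nnegrE ?expR_ge0 ?(le_trans block0) //.
exact: expR_ge1Dx.
Qed.
End alternating_run_probability.

Lemma measure_big_setU_le d (T : measurableType d) (R : realType)
    (mu : {measure set T -> \bar R}) (I : Type) (s : seq I) (Q : pred I) (F : I -> set T) :
  (forall i, measurable (F i)) ->
  (mu (\big[setU/set0]_(i <- s | Q i) F i) <= \sum_(i <- s | Q i) mu (F i))%E.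
Proof.
move=> mF; elim: s => [|i s IHs]; first by rewrite !big_nil measure0.
rewrite !big_cons; case: (Q i) => //.
apply: le_trans (measureU2 _ _ _) _ => //; first exact: bigsetU_measurable.
exact: leeD.
Qed.

(* Entry [i] records [X (i+1)]: the sequence starts at [X 1]. *)
Definition bits {T : Type} {R : nzRingType} (X : nat -> T -> R) (m : nat) (w : T) :=
  mkseq (fun i => X i.+1 w == 1) m.

Definition cylinder {T : Type} {R : nzRingType} (X : nat -> T -> R) (s : seq bool) : set T :=
  \bigcap_(i in [set` iota 1 (size s)]) X i @^-1` [set (nth false s i.-1)%:R].

(* Agrees with [[set w | g (bits X m w)]] wherever every [X i] is 0 or 1, and is
   visibly measurable. *)
Definition bits_event {T : Type} {R : nzRingType} (X : nat -> T -> R) (m : nat)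
    (g : pred (seq bool)) : set T :=
  \big[setU/set0]_(s <- bitseqs m | g s) cylinder X s.

Lemma bits_event_mem {T : Type} {R : nzRingType} (X : nat -> T -> R) m
    (g : pred (seq bool)) w :
  (forall i, (0 < i)%N -> X i w = 0 \/ X i w = 1) -> g (bits X m w) -> bits_event X m g w.
Proof.
move=> Xw gw; rewrite /bits_event -bigcup_seq_cond; exists (bits X m w).
  by rewrite /= gw andbT -{2}(size_mkseq (fun i => X i.+1 w == 1) m) mem_bitseqs.
move=> i /=; rewrite size_mkseq mem_iota => /andP[i0 im].
rewrite nth_mkseq; last by lia.
by rewrite prednK //; case: (Xw i i0) => ->; rewrite ?eqxx // eq_sym oner_eq0.
Qed.

Section bit_events.
Variables (d : measure_display) (T : measurableType d) (R : realType).
Variables (P : probability T R) (X : nat -> T -> R) (p : R).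
Hypothesis Xmeas : forall i, (0 < i)%N -> measurable_fun setT (X i).
Hypothesis X1 : forall i, (0 < i)%N -> P (X i @^-1` [set 1]) = p%:E.
Hypothesis X0 : forall i, (0 < i)%N -> P (X i @^-1` [set 0]) = (1 - p)%:E.
Hypothesis Xind : mutually_independent_rvs P X.

Lemma measurable_cylinder s : measurable (cylinder X s).
Proof.
apply: bigcap_measurableType => i /=; rewrite mem_iota => /andP[i0 _].
by rewrite -[X in measurable X]setTI; apply: Xmeas.
Qed.

Lemma cylinder_prob s : P (cylinder X s) = (bweight p s)%:E.
Proof.
have pos : all (fun i => 0 < i)%N (iota 1 (size s)).
  by apply/allP => i; rewrite mem_iota => /andP[].
rewrite /cylinder Xind ?iota_uniq // -prodEFin.
rewrite /bweight (big_nth false) /index_iota subn0 (iotaDl 1 0) big_map.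
by apply: eq_bigr => i _; rewrite add1n /bit_weight /=; case: (nth false s i); rewrite ?X1 ?X0.
Qed.

Lemma measurable_bits_event m g : measurable (bits_event X m g).
Proof. by apply: bigsetU_measurable => s _; exact: measurable_cylinder. Qed.

Lemma bits_event_prob m g :
  (P (bits_event X m g) <= (bexpect p m (fun s => (g s)%:R))%:E)%E.
Proof.
apply: le_trans (measure_big_setU_le P _ _ measurable_cylinder) _.
rewrite (eq_bigr (fun s => (bweight p s)%:E)) => [|s _]; last exact: cylinder_prob.
rewrite sumEFin lee_fin bexpectE big_mkcond /=; apply: ler_sum => s _.
by case: (g s); rewrite ?mul1r ?mul0r.
Qed.

End bit_events.

Section constants.
Variable R : realType.
Implicit Types (lam eps r s x : R).

Lemma half_le_ln x : 2 <= x -> 1 / 2 <= ln x.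
Proof.
move=> x2; have x0 : 0 < x by lra.
have xV0 : 0 < x^-1 by rewrite invr_gt0.
have xVle : x^-1 <= 1 / 2 by rewrite div1r lef_pV2 ?posrE //; lra.
have := @le_ln1Dx R (x^-1 - 1); rewrite (_ : 1 + (x^-1 - 1) = x^-1) ?lnV ?posrE //; last by ring.
lra.
Qed.

Definition longest_run_bound lam eps (N : nat) : R :=
  logb lam N%:R - logb lam (logb lam (logb lam N%:R))
  + logb lam (logb lam (expR 1)) - logb lam 2 - 1 - eps.

Definition run_horizon lam eps (n : nat) : nat :=
  Num.truncn (lam ^+ n * (2 * expR (eps * ln lam) * ln n.-1%:R)).

Section run_horizon_le.
Variables (lam eps : R) (N : nat).
Hypothesis lam2 : (2 : R) <= lam.
Hypothesis lnN_ge : ln lam * lam <= ln N%:R.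
Local Notation l := (ln lam).
Local Notation L1 := (logb lam N%:R).
Local Notation L2 := (logb lam L1).

Let lam_gt0 : 0 < lam. Proof. by have := lam2; lra. Qed.

Let l_ge_half : 1 / 2 <= l. Proof. exact: half_le_ln. Qed.

Let l_gt0 : 0 < l. Proof. by have := l_ge_half; lra. Qed.

Let N_gt0 : 0 < N%:R :> R.
Proof.
rewrite ltr0n lt0n; apply/eqP => N0; move: lnN_ge; rewrite N0 (@ln0 _ 0) //.
by have := l_gt0; have := lam_gt0; nra.
Qed.

Let L1_ge : lam <= L1.
Proof. by rewrite /logb ler_pdivlMr // mulrC. Qed.

Let L2_ge : 1 <= L2.
Proof.
have := L1_ge; have := lam_gt0; rewrite /logb => lam0 L1ge.
by rewrite ler_pdivlMr // mul1r ler_ln ?posrE //; lra.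
Qed.

Let mul_logb x : l * logb lam x = ln x.
Proof. by rewrite /logb mulrC divfK // gt_eqF. Qed.

Lemma ln_longest_run_bound :
  l * (longest_run_bound lam eps N + 1 + eps) = ln N%:R - ln L2 - ln (2 * l).
Proof.
have -> : l * (longest_run_bound lam eps N + 1 + eps) =
  l * L1 - l * logb lam L2 + l * logb lam (logb lam (expR 1)) - l * logb lam 2.
  by rewrite /longest_run_bound; ring.
have le1 : logb lam (expR 1) = l^-1 by rewrite /logb expRK div1r.
rewrite !mul_logb le1.
by rewrite lnV ?posrE // lnM ?posrE //; ring.
Qed.

Lemma longest_run_bound_le_logb : 0 <= eps -> longest_run_bound lam eps N <= L1.
Proof.
move=> eps0; have l0 := l_gt0; rewrite -(ler_pM2l l0) mul_logb.
have lnL2 : 0 <= ln L2 by rewrite ln_ge0.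
have ln2l : 0 <= ln (2 * l) by rewrite ln_ge0 //; have := l_ge_half; lra.
have epsl : 0 <= l * eps by rewrite mulr_ge0 // ltW.
by have := ln_longest_run_bound; rewrite !mulrDr mulr1; lra.
Qed.

Lemma run_horizon_le n : 0 <= eps -> (2 <= n)%N ->
  n.-1%:R <= longest_run_bound lam eps N -> (run_horizon lam eps n <= N)%N.
Proof.
move=> eps0 n2 hx; have l0 := l_gt0; have L2_1 := L2_ge.
have L1_0 : 0 < L1 by have := L1_ge; have := lam_gt0; lra.
have n1_gt0 : 0 < n.-1%:R :> R by rewrite ltr0n; lia.
have lnn1 : ln n.-1%:R <= l * L2.
  rewrite mul_logb ler_ln ?posrE //.
  exact: le_trans hx (longest_run_bound_le_logb eps0).
have A0 : 0 < lam ^+ n * expR (eps * l) by rewrite mulr_gt0 ?exprn_gt0 ?expR_gt0.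
have l20 : 0 < 2 * l by lra.
have L20 : 0 < L2 by lra.
have A20 : 0 < lam ^+ n * expR (eps * l) * (2 * l) by rewrite mulr_gt0.
have key : lam ^+ n * expR (eps * l) * (2 * l) * L2 <= N%:R.
  have lnMp x y : 0 < x -> 0 < y -> ln (x * y) = ln x + ln y.
    by move=> x0 y0; rewrite lnM ?posrE.
  rewrite -ler_ln ?posrE ?(mulr_gt0 A20 L20) // (lnMp _ _ A20 L20) (lnMp _ _ A0 l20).
  rewrite lnMp ?exprn_gt0 ?expR_gt0 // lnXn // expRK -[l *+ n]mulr_natr.
  have := ln_longest_run_bound; have := ler_wpM2l (ltW l0) hx.
  rewrite (_ : n%:R = n.-1%:R + 1 :> R); first by rewrite !mulrDr mulr1; lra.
  by rewrite natr1 prednK // ltnW.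
rewrite /run_horizon truncn_le_nat; apply: (@le_lt_trans _ _ N%:R); last by rewrite ltr_nat.
apply: le_trans key; rewrite -!mulrA; apply: ler_wpM2l; first by rewrite exprn_ge0 // ltW.
rewrite mulrCA; apply: ler_wpM2l; first exact: expR_ge0.
by apply: ler_wpM2l => //; lra.
Qed.

End run_horizon_le.

Lemma run_horizon_exponent r eps n : 0 < r -> r <= 1 / 2 -> (2 <= n)%N ->
  expR (- (n%:R * r ^+ n) * (run_horizon r^-1 eps n %/ (n + n))%:R) <=
  expR 2 * expR (- expR (eps * ln r^-1) * ln n.-1%:R).
Proof.
move=> r0 r_half n2; rewrite -expRD ler_expR.
set A := 2 * expR (eps * ln r^-1) * ln n.-1%:R.
set T := run_horizon r^-1 eps n; set K := (T %/ (n + n))%N.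
set x := r ^+ n; set a : R := n%:R; set k : R := K%:R; set t : R := T%:R.
have x0 : 0 < x by rewrite exprn_gt0.
have xV : r^-1 ^+ n * x = 1 by rewrite exprVn mulVf // gt_eqF.
have ax1 : a * x <= 1.
  have x2 : x <= (2 ^+ n)^-1.
    by rewrite /x -exprVn lerXn2r ?nnegrE ?invr_ge0 //; lra.
  have a2 : a <= 2 ^+ n by rewrite /a -natrX ler_nat ltnW // ltn_expl.
  apply: le_trans (ler_pM (ler0n _ _) (ltW x0) a2 x2) _.
  by rewrite mulfV // expf_neq0.
have a1 : 1 <= a by rewrite /a ler1n; lia.
have tA : A - x < t * x.
  have := truncnS_gt (r^-1 ^+ n * A).
  by rewrite -/T -natr1 -/t -(ltr_pM2r x0) mulrAC xV mul1r mulrDl mul1r; lra.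
have tK : t * x < (k + 1) * (a + a) * x.
  rewrite ltr_pM2r // /t /k /a natr1 -natrD -natrM ltr_nat.
  by apply: ltn_ceil; lia.
have : A - x < 2 * (a * x * k) + 2 * (a * x).
  by rewrite [X in _ < X](_ : _ = (k + 1) * (a + a) * x); [exact: lt_trans tA tK | ring].
have x1 : x <= 1 by nra.
rewrite /A; lra.
Qed.

Lemma expR_ln_telescope s m : 1 < s -> (0 < m)%N ->
  (s - 1) * expR (- s * ln m.+1%:R) <=
  expR (- (s - 1) * ln m%:R) - expR (- (s - 1) * ln m.+1%:R).
Proof.
move=> s1 m0; set t := s - 1; have t0 : 0 < t by rewrite /t subr_gt0.
have m0R : 0 < m%:R :> R by rewrite ltr0n.
set a := ln m.+1%:R; set b := ln m%:R; set E := expR (- t * a).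
have E0 : 0 < E by rewrite expR_gt0.
have Es : expR (- s * a) = E / m.+1%:R.
  rewrite /E (_ : - s * a = - t * a + - a); last by rewrite /t; ring.
  by rewrite expRD expRN /a lnK ?posrE.
have Eb : expR (- t * b) = E * expR (t * (a - b)) by rewrite /E -expRD; congr expR; ring.
have ab : m.+1%:R^-1 <= a - b.
  have := @le_ln1Dx R (- m.+1%:R^-1).
  rewrite (_ : 1 - m.+1%:R^-1 = m%:R / m.+1%:R); last first.
    by rewrite -natr1; field; rewrite -?natr1; lra.
  rewrite ln_div ?posrE ?ltr0n // -/a -/b => h.
  have /h : -1 < - m.+1%:R^-1 :> R by rewrite ltrN2 invf_lt1 ?ltr0n // ltr1n.
  by rewrite -opprB lerN2.
rewrite Es Eb mulrCA.
apply: (@le_trans _ _ (E * (t * (a - b)))).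
  by rewrite ler_pM2l // ler_pM2l.
have -> : E * expR (t * (a - b)) - E = E * (expR (t * (a - b)) - 1) by ring.
by rewrite ler_pM2l // lerBrDl; exact: expR_ge1Dx.
Qed.

Lemma sum_expR_ln_le s N : 1 < s ->
  \sum_(k < N) expR (- s * ln k.+1%:R) <= s / (s - 1).
Proof.
move=> s1; have t0 : 0 < s - 1 by rewrite subr_gt0.
pose g k := - expR (- (s - 1) * ln k.+1%:R).
have tail : (s - 1) * \sum_(0 <= k < N.-1) expR (- s * ln k.+2%:R) <= 1.
  rewrite mulr_sumr; apply: (@le_trans _ _ (\sum_(0 <= k < N.-1) (g k.+1 - g k))).
    by apply: ler_sum => k _; rewrite /g opprK [X in _ <= X]addrC; apply: expR_ln_telescope.
  by rewrite telescope_sumr // /g ln1 mulr0 expR0 opprK gerDr oppr_le0 expR_ge0.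
case: N tail => [|N] /= tail; first by rewrite big_ord0; apply: divr_ge0; lra.
rewrite big_ord_recl /= ln1 mulr0 expR0.
rewrite (_ : s / (s - 1) = 1 + 1 / (s - 1)); last by field; rewrite subr_eq0 gt_eqF.
rewrite lerD2l ler_pdivlMr // mulrC; rewrite big_mkord in tail.
by under eq_bigr => i _ do rewrite /bump leq0n add1n.
Qed.
End constants.

Lemma ae_eventually_notin d (T : measurableType d) (R : realType)
    (mu : {measure set T -> \bar R}) (F : (set T)^nat) :
  (forall n, measurable (F n)) -> (\sum_(n <oo) mu (F n) < +oo)%E ->
  \forall x \ae mu, exists m, forall n, (m <= n)%N -> ~ F n x.
Proof.
move=> mF sumF; exists (lim_sup_set F); split; last first.
- move=> x /= nev n _; apply: contrapT => nF; apply: nev; exists n => j nj Fj.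
  by apply: nF; exists j.
- exact: lim_sup_set_cvg0.
- by apply: bigcapT_measurable => n; apply: bigcup_measurable => k _.
Qed.

Lemma nneseries_ub (R : realType) (u : (\bar R)^nat) (B : R) :
  (forall n, 0 <= u n)%E -> (forall N, \sum_(0 <= n < N) u n <= B%:E)%E ->
  (\sum_(n <oo) u n <= B%:E)%E.
Proof.
move=> u0 uB; apply: lime_le; first exact: is_cvg_nneseries.
exact: nearW.
Qed.

Lemma switch_term_neq (R : realType) (a b : R) : (a = 0 \/ a = 1) -> (b = 0 \/ b = 1) ->
  (a == 1) != (b == 1) -> (1 - a) * b + a * (1 - b) = 1.
Proof.
have h01 : ((0 : R) == 1) = false by rewrite eq_sym oner_eq0.
by case=> ->; case=> ->; rewrite ?eqxx ?h01 //= => _; ring.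
Qed.

Lemma longest_switches_ge (T : Type) (R : realType) (X : nat -> T -> R) w n m N :
  (forall i, (0 < i)%N -> X i w = 0 \/ X i w = 1) -> (0 < n)%N ->
  has_alt_window (bits X m w) n -> (m <= N)%N -> (n.-1 <= M X N w)%N.
Proof.
move=> bin n0 /has_alt_windowP[j w_j] mN.
have jn : (j + n <= m)%N by case/andP: w_j; rewrite size_mkseq.
have bitsE k : (k < m)%N -> nth false (bits X m w) k = (X k.+1 w == 1).
  by move=> km; rewrite nth_mkseq.
have Hn : inH X 1 n N w.
  apply/hasP; exists j.+1; first by rewrite mem_iota; lia.
  rewrite /switches big_nat_cond (eq_bigr (fun _ => 1)) => [|i /andP[/andP[i1 i2] _]].
    by rewrite -big_nat_cond sumr_const_nat (_ : n + j.+1 - j.+2 = n.-1)%N //; lia.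
  have lt : ((i - j.+2).+1 < n)%N by lia.
  have := alt_window_neq w_j lt.
  rewrite (_ : j + (i - j.+2) = i.-2)%N; last lia.
  rewrite !bitsE; try lia.
  rewrite (_ : i.-2.+1 = i.-1)%N; last lia.
  rewrite prednK; last lia.
  by apply: switch_term_neq; apply: bin; lia.
rewrite /M /longest_switches.
by apply: (@leq_bigmax_seq _ _ _ predn n) => //; rewrite mem_index_iota; lia.
Qed.

Lemma floor_le_truncn (R : realType) (x : R) : Num.floor x <= (Num.truncn x)%:Z.
Proof. by rewrite truncEfloor; case: (Num.floor x). Qed.

Lemma eventually_longest_run_bound_le (T : Type) (R : realType) (X : nat -> T -> R) w
    (lam eps : R) n0 :
  2 <= lam -> 0 <= eps -> (2 <= n0)%N ->
  (forall i, (0 < i)%N -> X i w = 0 \/ X i w = 1) ->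
  (forall n, (n0 <= n)%N -> has_alt_window (bits X (run_horizon lam eps n) w) n) ->
  exists N0, forall N, (N0 <= N)%N ->
    Num.floor (longest_run_bound lam eps N) <= (M X N w)%:Z.
Proof.
move=> lam2 eps0 n02 bin win.
exists (maxn (Num.truncn (expR (ln lam * lam))).+1 (run_horizon lam eps n0)) => N.
rewrite geq_max => /andP[N1 Tn0].
have lnN : ln lam * lam <= ln N%:R.
  have N0 : (0 : R) < N%:R by rewrite ltr0n; lia.
  rewrite -[X in X <= _]expRK ler_ln ?posrE ?expR_gt0 //.
  by apply/ltW/(lt_le_trans (truncnS_gt _)); rewrite ler_nat.
apply: le_trans (floor_le_truncn _) _; rewrite lez_nat.
set k := Num.truncn _; case: (ltnP k.+1 n0) => [kn0|n0k].
  apply: leq_trans (longest_switches_ge bin _ (win n0 (leqnn _)) Tn0); lia.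
have k0 : (0 < k)%N by lia.
have kx : k%:R <= longest_run_bound lam eps N.
  by rewrite truncn_le; move: k0; rewrite truncn_gt0; lra.
have n2 := leq_trans n02 n0k.
exact: longest_switches_ge bin (ltn0Sn k) (win k.+1 n0k) (run_horizon_le lam2 lnN eps0 n2 kx).
Qed.

Section bernoulli_sequence.
Variables (d : measure_display) (T : measurableType d) (R : realType).
Variables (P : probability T R) (X : nat -> T -> R) (p eps : R).
Hypothesis p01 : 0 < p < 1.
Hypothesis eps0 : 0 < eps.
Hypothesis Xmeas : forall i, (0 < i)%N -> measurable_fun setT (X i).
Hypothesis X1 : forall i, (0 < i)%N -> P (X i @^-1` [set 1]) = p%:E.
Hypothesis X0 : forall i, (0 < i)%N -> P (X i @^-1` [set 0]) = (1 - p)%:E.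
Hypothesis Xind : mutually_independent_rvs P X.
Local Notation lam := (Num.sqrt (p * (1 - p)))^-1.

Lemma ae_binary : \forall w \ae P, forall i, (0 < i)%N -> X i w = 0 \/ X i w = 1.
Proof.
apply: ae_foralln => -[|i]; first exact: aeW.
have mX (b : R) : measurable (X i.+1 @^-1` [set b]).
  by rewrite -[X in measurable X]setTI; apply: Xmeas => //; exact: measurable_set1.
set B := X i.+1 @^-1` [set 0] `|` X i.+1 @^-1` [set 1].
have mB : measurable B by exact: measurableU.
exists (~` B); split; first exact: measurableC.
  transitivity (1 - P B)%E; first exact: probability_setC.
  rewrite measureU //; last first.
    by apply/seteqP; split => x // [/= ->] /esym/eqP; rewrite oner_eq0.
  transitivity (1 - ((1 - p)%:E + p%:E))%E.
    by congr (_ - (_ + _))%E; [exact: X0 | exact: X1].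
  by rewrite -EFinD subrK subrr.
by move=> w /= nbin Bw; apply: nbin => _; case: Bw => /= ->; [left|right].
Qed.

Lemma lam_ge2 : 2 <= lam.
Proof.
have r0 := sqrt_pq_gt0 p01; have rh := sqrt_pq_le_half p01.
by rewrite -[2]invrK lef_pV2 ?posrE ?invr_gt0 //; lra.
Qed.

(* Indexed by [k = n - 2], so that every [k] stands for a window length [n >= 2]. *)
Definition missed_run k :=
  bits_event X (run_horizon lam eps k.+2) (fun t => ~~ has_alt_window t k.+2).

Lemma missed_run_prob k :
  (P (missed_run k) <= (expR 2 * expR (- expR (eps * ln lam) * ln k.+1%:R))%:E)%E.
Proof.
apply: le_trans (bits_event_prob Xmeas X1 X0 Xind _ _) _; rewrite lee_fin.
apply: le_trans (no_alt_window_prob p01 _ _) _ => //.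
exact: run_horizon_exponent (sqrt_pq_gt0 p01) (sqrt_pq_le_half p01) _.
Qed.

Lemma missed_run_summable : (\sum_(k <oo) P (missed_run k) < +oo)%E.
Proof.
set s := expR (eps * ln lam).
have s1 : 1 < s by rewrite expR_gt1 mulr_gt0 // ln_gt0 //; have := lam_ge2; lra.
apply: le_lt_trans (nneseries_ub (B := expR 2 * (s / (s - 1))) _ _) (ltry _) => //.
move=> N; apply: (@le_trans _ _ (\sum_(0 <= k < N) (expR 2 * expR (- s * ln k.+1%:R))%:E)%E).
  by apply: lee_sum => k _; exact: missed_run_prob.
rewrite sumEFin lee_fin big_mkord -mulr_sumr ler_wpM2l ?expR_ge0 //.
exact: sum_expR_ln_le.
Qed.

Lemma ae_eventually_alt_window : \forall w \ae P, exists n0, (2 <= n0)%N /\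
  forall n, (n0 <= n)%N -> has_alt_window (bits X (run_horizon lam eps n) w) n.
Proof.
have mF k : measurable (missed_run k) by exact: measurable_bits_event.
apply: filterS2 ae_binary (ae_eventually_notin mF missed_run_summable) => w bin [m nF].
exists m.+2; split => // n mn; apply: contrapT => /negP nw.
apply: (nF n.-2); first lia.
by apply: bits_event_mem => //; rewrite (_ : n.-2.+2 = n) //; lia.
Qed.

End bernoulli_sequence.

Theorem theorem2p2 (R : realType) (d : measure_display) (T : measurableType d)
  (P : probability T R) (X : nat -> T -> R) (p : R)
  (hp0 : 0 < p) (hp1 : p < 1)
  (Xmeas : forall i, (0 < i)%N -> measurable_fun setT (X i))
  (X1 : forall i, (0 < i)%N -> P (X i @^-1` [set 1]) = p%:E)
  (X0 : forall i, (0 < i)%N -> P (X i @^-1` [set 0]) = (1 - p)%:E)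
  (Xind : mutually_independent_rvs P X)
  (eps : R) (heps : 0 < eps) :
  let q := 1 - p in
  let lam := (Num.sqrt (p * q))^-1 in
  {ae P, forall w, exists N0 : nat, forall N : nat, (N0 <= N)%N ->
     Num.floor (logb lam N%:R - logb lam (logb lam (logb lam N%:R))
                + logb lam (logb lam (expR 1)) - logb lam 2 - 1 - eps)
     <= (M X N w)%:Z}.
Proof.
move=> q lam; have p01 : 0 < p < 1 by rewrite hp0 hp1.
apply: filterS2 (ae_binary Xmeas X1 X0) (ae_eventually_alt_window p01 heps Xmeas X1 X0 Xind).
move=> w bin [n0 [n02 win]].
exact: eventually_longest_run_bound_le (lam_ge2 p01) (ltW heps) n02 bin win.
Qed.
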